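(* Let $S\subseteq\{(i,j)\in[n]\times[n]:i<j\}$ be such that $U_S:=\{I_n+\sum_{(i,j)\in S}a_{ij}E_{ij}: a_{ij}\in\mathbb F\}$ is a subgroup of $U_n$. Then $U_S$ is generated by $\{I_n+\lambda E_{ij}:(i,j)\in S,\ \lambda\in\mathbb F\}$, and every element of $U_S$ is a product of at most $|S|$ elements of this set.
   Context: $\mathbb F$ is a field; $[n]=\{1,\dots,n\}$; $U_n$ is the group of $n\times n$ upper triangular matrices over $\mathbb F$ with all diagonal entries $1$; $E_{ij}$ is the matrix unit. *)

From HB Require Import structures.
From mathcomp Require Import all_boot all_order all_algebra.
Set Implicit Arguments. Unset Strict Implicit. Unset Printing Implicit Defensive.
Import GRing.Theory.
Local Open Scope ring_scope.

(* Matrices are 'M[F]_n with indices 'I_n = {0,...,n-1} (standing for [n]). *)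

Definition Eij (F : fieldType) (n : nat) (i j : 'I_n) : 'M[F]_n := delta_mx i j.

Definition elemU (F : fieldType) (n : nat) (i j : 'I_n) (l : F) : 'M[F]_n :=
  1%:M + l *: @Eij F n i j.

Definition in_Un (F : fieldType) (n : nat) (M : 'M[F]_n) : Prop :=
  (forall i, M i i = 1) /\ (forall i j : 'I_n, (j < i)%N -> M i j = 0).

Definition in_US (F : fieldType) (n : nat) (S : {set 'I_n * 'I_n}) (M : 'M[F]_n) : Prop :=
  exists a : 'I_n -> 'I_n -> F,
    M = 1%:M + \sum_(p in S) a p.1 p.2 *: @Eij F n p.1 p.2.

Definition subgroup_of_Un (F : fieldType) (n : nat) (P : 'M[F]_n -> Prop) : Prop :=
  [/\ (forall M, P M -> in_Un M),
      P 1%:M,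
      (forall A B, P A -> P B -> P (A *m B)) &
      (forall A, P A -> A \in unitmx /\ P (invmx A))].

Definition mprod (F : fieldType) (n : nat) (s : seq 'M[F]_n) : 'M[F]_n :=
  foldr (fun A B => A *m B) 1%:M s.

Definition in_gens (F : fieldType) (n : nat) (S : {set 'I_n * 'I_n}) (M : 'M[F]_n) : Prop :=
  exists2 p, p \in S & exists l : F, M = @elemU F n p.1 p.2 l.

Definition in_generated (F : fieldType) (n : nat) (X : 'M[F]_n -> Prop) (M : 'M[F]_n) : Prop :=
  exists s : seq 'M[F]_n,
    (forall A, A \in s -> X A \/ (A \in unitmx /\ X (invmx A))) /\ M = mprod s.

From mathcomp Require Import all_boot all_order all_algebra.
From mathcomp Require Import zify.
Set Implicit Arguments. Unset Strict Implicit. Unset Printing Implicit Defensive.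
Import GRing.Theory.
Local Open Scope ring_scope.

(* Right multiplication by I + l E_ij adds l times column i to column j.  For
   M upper unitriangular, column i vanishes below row i, so this changes only
   the entries (p, j) with p <= i.  Hence the off-diagonal entries of M in U_S
   can be cleared one at a time, in decreasing column-major order of their
   positions, each by one elementary factor with (i, j) in S, without spoiling
   the entries already cleared; positions outside S never need clearing since
   every intermediate product stays in U_S.  Undoing the factors writes M as
   a product of at most |S| generators. *)

Lemma mulmx_elemU_entry (F : fieldType) n (M : 'M[F]_n) i j l p q :
  (M *m elemU i j l) p q = M p q + l * (M p i * (q == j)%:R).
Proof.
rewrite /elemU /Eij mulmxDr mulmx1 -scalemxAr !mxE; congr (_ + _ * _).
rewrite (bigD1 i) //= big1 => [|k neq_ki]; rewrite !mxE ?eqxx.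
  by rewrite addr0 andbC /=; case: (q == j); rewrite ?mulr1 ?mulr0.
by rewrite (negbTE neq_ki) mulr0.
Qed.

Lemma mul_elemUN (F : fieldType) n (i j : 'I_n) l : i != j ->
  @elemU F n i j (- l) *m elemU i j l = 1%:M.
Proof.
move=> neq_ij; rewrite /elemU /Eij mulmxDr mulmx1 mulmxDl mul1mx.
rewrite -!scalemxAr -scalemxAl mul_delta_mx_0 1?eq_sym // !scaler0 addr0.
by rewrite scaleNr addrAC -addrA subrr addr0.
Qed.

Lemma mprod_cat (F : fieldType) n (s1 s2 : seq 'M[F]_n) :
  mprod (s1 ++ s2) = mprod s1 *m mprod s2.
Proof.
elim: s1 => [|A s IHs] /=; first by rewrite /mprod /= mul1mx.
by rewrite /mprod /= -/(mprod _) IHs mulmxA.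
Qed.

Lemma elemU_in_US (F : fieldType) n (S : {set 'I_n * 'I_n}) (i j : 'I_n) l :
  (i, j) \in S -> in_US S (@elemU F n i j l).
Proof.
move=> ijS; exists (fun x y => if (x == i) && (y == j) then l else 0).
rewrite /elemU; congr (_ + _).
rewrite (bigD1 (i, j)) //= !eqxx /= big1 ?addr0 // => x /andP [_ neq_x].
case: ifP => [/andP [/eqP x1 /eqP x2]|_]; last by rewrite scale0r.
by move: neq_x; rewrite -x1 -x2 -surjective_pairing eqxx.
Qed.

Lemma in_US_notin (F : fieldType) n (S : {set 'I_n * 'I_n}) (M : 'M[F]_n) p q :
  in_US S M -> (p, q) \notin S -> p != q -> M p q = 0.
Proof.
move=> [a ->] pqNS neq_pq; rewrite !mxE summxE (negbTE neq_pq) add0r.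
rewrite big1 // => x xS; rewrite !mxE.
case: (_ =P _) => [x1|]; last by rewrite mulr0.
case: (_ =P _) => [x2|]; last by rewrite mulr0.
by move: pqNS; rewrite x1 x2 -surjective_pairing xS.
Qed.

Lemma in_generated_sub (F : fieldType) n (P X : 'M[F]_n -> Prop) M :
  subgroup_of_Un P -> (forall A, X A -> P A) -> in_generated X M -> P M.
Proof.
case=> _ P1 PM PV XP [s [sX ->]]; elim: s sX => [|A s IHs] sX; first exact: P1.
rewrite /mprod /= -/(mprod _); apply: PM; last first.
  by apply: IHs => B Bs; apply: sX; rewrite inE Bs orbT.
have [/XP //|[_ /XP PAV]] := sX A (mem_head _ _).
by rewrite -(invmxK A); apply: (PV _ PAV).2.
Qed.

Section ColumnMajorRank.
Variable n : nat.

Definition colrank (x : 'I_n * 'I_n) : nat := x.2 * n + x.1.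

Lemma colrank_inj : injective colrank.
Proof.
move=> [p q] [i j]; rewrite /colrank /= => eq_rank.
have n_gt0 : (0 < n)%N by apply: leq_ltn_trans (ltn_ord p).
have := congr1 (modn^~ n) eq_rank; have := congr1 (divn^~ n) eq_rank => /=.
rewrite !modnMDl !divnMDl // !modn_small // !divn_small // !addn0.
by move=> /val_inj -> /val_inj ->.
Qed.

Lemma colrank_lt x : (colrank x < n * n)%N.
Proof.
case: x => p q; rewrite /colrank /=; apply: leq_trans (leq_mul (ltn_ord q) (leqnn n)).
by rewrite mulSn addnC ltn_add2r.
Qed.

End ColumnMajorRank.

Definition offdiag_zero_from (F : fieldType) n m (M : 'M[F]_n) : Prop :=
  forall p q : 'I_n, p != q -> (m <= colrank (p, q))%N -> M p q = 0.

Lemma offdiag_zero_from0 (F : fieldType) n (M : 'M[F]_n) :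
  in_Un M -> offdiag_zero_from 0 M -> M = 1%:M.
Proof.
move=> [M_diag _] M0; apply/matrixP => p q; rewrite !mxE.
by case: (eqVneq p q) => [->|neq_pq]; rewrite ?M_diag ?M0.
Qed.

Lemma offdiag_zero_from_clear (F : fieldType) n m (M : 'M[F]_n) (i j : 'I_n) :
  in_Un M -> offdiag_zero_from m.+1 M -> (i < j)%N -> colrank (i, j) = m ->
  offdiag_zero_from m (M *m elemU i j (- M i j)).
Proof.
rewrite /offdiag_zero_from /colrank /= => [[M_diag M_lower]] Mm lt_ij rank_ij.
move=> p q; rewrite mulmx_elemU_entry.
case: (eqVneq q j) => [->|neq_qj] neq_pq le_m; last first.
  rewrite !mulr0 addr0 Mm //; rewrite leq_eqVlt in le_m.
  case/orP: le_m => [/eqP eq_rank|//].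
  have /colrank_inj [_ eq_qj] : colrank (p, q) = colrank (i, j).
    by rewrite /colrank /= -eq_rank.
  by rewrite eq_qj eqxx in neq_qj.
rewrite mulr1; case: (ltngtP p i) => [lt_pi|lt_ip|/val_inj ->].
- by move: le_m; rewrite -rank_ij; lia.
- by rewrite (M_lower p i) // mulr0 addr0 Mm // -rank_ij; lia.
- by rewrite (M_diag i) mulr1 subrr.
Qed.

Section Factorization.
Variables (F : fieldType) (n : nat) (S : {set 'I_n * 'I_n}).
Hypothesis S_upper : forall x, x \in S -> (x.1 < x.2)%N.
Hypothesis US_subgroup : subgroup_of_Un (in_US (F := F) S).

Definition S_below m := [set x in S | (colrank x < m)%N].

Lemma S_below_subS m : S_below m \subset S_below m.+1.
Proof. by apply/subsetP => y; rewrite !inE => /andP [-> /ltnW]. Qed.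

Lemma card_S_below_key m x :
  x \in S -> colrank x = m -> (#|S_below m| < #|S_below m.+1|)%N.
Proof.
move=> xS rank_x; apply: proper_card; apply/properP; split; first exact: S_below_subS.
by exists x; rewrite !inE xS rank_x ?ltnSn ?ltnn.
Qed.

Lemma offdiag_zero_from_notin m (M : 'M[F]_n) :
  in_US S M -> offdiag_zero_from m.+1 M ->
  (forall x, x \in S -> colrank x != m) -> offdiag_zero_from m M.
Proof.
move=> MS Mm no_key p q neq_pq; rewrite leq_eqVlt => /orP [/eqP rank_pq|]; last exact: Mm.
apply: (in_US_notin MS) => //; apply/negP => pqS.
by have := no_key _ pqS; rewrite rank_pq eqxx.
Qed.

Lemma in_US_gens_prod_below m (M : 'M[F]_n) :
  in_US S M -> offdiag_zero_from m M ->
  exists s : seq 'M[F]_n, (forall A, A \in s -> in_gens S A) /\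
    (size s <= #|S_below m|)%N /\ M = mprod s.
Proof.
have [M_Un _ USM _] := US_subgroup.
elim: m M => [|m IHm] M MS Mm.
  by exists [::]; rewrite /mprod /= (offdiag_zero_from0 (M_Un _ MS) Mm).
case: (pickP [pred x in S | colrank x == m]) => [[i j] /andP [/= ijS /eqP rank_ij]|no_key].
  have lt_ij := S_upper ijS.
  have M'S : in_US S (M *m elemU i j (- M i j)) by apply: USM => //; apply: elemU_in_US.
  have [s [s_gens [size_s M'_prod]]] :=
    IHm _ M'S (offdiag_zero_from_clear (M_Un _ MS) Mm lt_ij rank_ij).
  exists (s ++ [:: elemU i j (M i j)]); split; last split.
  - move=> A; rewrite mem_cat => /orP [/s_gens //|]; rewrite inE => /eqP ->.
    by exists (i, j) => //; exists (M i j).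
  - by rewrite size_cat addn1; apply: leq_ltn_trans size_s (card_S_below_key ijS rank_ij).
  - rewrite mprod_cat -M'_prod /mprod /= mulmx1 -mulmxA mul_elemUN ?mulmx1 //.
    by rewrite neq_ltn lt_ij.
have Mm' : offdiag_zero_from m M.
  by apply: offdiag_zero_from_notin => // x xS; have := no_key x; rewrite /= xS => /negbT.
have [s [s_gens [size_s M_prod]]] := IHm _ MS Mm'.
exists s; do 2!split => //.
exact: leq_trans size_s (subset_leq_card (S_below_subS m)).
Qed.

Lemma in_US_gens_prod (M : 'M[F]_n) : in_US S M ->
  exists s : seq 'M[F]_n,
    (forall A, A \in s -> in_gens S A) /\ (size s <= #|S|)%N /\ M = mprod s.
Proof.
move=> MS; have [|s [s_gens [size_s M_prod]]] := in_US_gens_prod_below (m := n * n) MS.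
  by move=> p q _; rewrite leqNgt colrank_lt.
exists s; do 2!split => //; apply: leq_trans size_s (subset_leq_card _).
by apply/subsetP => x; rewrite inE => /andP [].
Qed.

End Factorization.

Theorem lemma2p13 (F : fieldType) (n : nat) (S : {set 'I_n * 'I_n}) :
  (forall p, p \in S -> (p.1 < p.2)%N) ->
  subgroup_of_Un (in_US (F := F) S) ->
  (forall M : 'M[F]_n, in_US S M <-> in_generated (in_gens S) M) /\
  (forall M : 'M[F]_n, in_US S M ->
     exists s : seq 'M[F]_n,
       (forall A, A \in s -> in_gens S A) /\ (size s <= #|S|)%N /\ M = mprod s).
Proof.
move=> S_upper US_subgroup; split => [M|]; last exact: in_US_gens_prod.
split=> [/(in_US_gens_prod S_upper US_subgroup) [s [s_gens [_ ->]]]|].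
  by exists s; split => // A /s_gens; left.
apply: in_generated_sub => // A [[i j] ijS [l ->]].
exact: elemU_in_US.
Qed.
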